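(* Let $(G,S)$ and $(H,T)$ be finitely generated groups with finite generating sets, such that there exists a snake embedding $\phi:G\to H$ (from $(G,S)$ to $(H,T)$). Then the infinite snake problem (resp. the ouroboros problem) for $(G,S)$ many-one reduces to the infinite snake problem (resp. the ouroboros problem) for $(H,T)$.
   Context: An invertible-reversible transducer is a tuple $\mathcal M=(Q,S,T,q_0,\delta,\eta)$ with $Q$ a finite set of states, $q_0\in Q$, $\delta:Q\times S\to Q$, $\eta:Q\times S\to T$ with $\eta(q,\cdot)$ injective for every $q$, and such that for all $q\in Q$, $s\in S$ there is a unique $q'$ with $\delta(q',s)=q$. One extends by $\eta(q,s^{-1})=\eta(q',s)^{-1}$ and $\delta(q,s^{-1})=q'$ where $q'$ is the unique state with $\delta(q',s)=q$. For $w\in(S\cup S^{-1})^*$, $q_w$ is the state reached from $q_0$ after reading $w$, and $f_{\mathcal M}:(S\cup S^{-1})^*\to(T\cup T^{-1})^*$ is defined by $f_{\mathcal M}(\epsilon)=\epsilon$, $f_{\mathcal M}(ws^{\pm1})=f_{\mathcal M}(w)\eta(q_w,s^{\pm1})$. A map $\phi:G\to H$ is a snake embedding if there is such a transducer with $\phi(g)=\overline{f_{\mathcal M}(w)}$ for every word $w$ representing $g$, and $f_{\mathcal M}(w)=_H f_{\mathcal M}(w')$ iff $w=_G w'$. A tileset graph for $(G,S)$ is a finite multigraph $\Gamma=(A,B)$ with edges $(a,a',s)$, $a,a'\in A$, $s\in S\cup S^{-1}$, with $(a,a',s)\in B\Rightarrow(a',a,s^{-1})\in B$. A $\Gamma$-snake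 on $I\subseteq\mathbb{Z}$ ($I=\mathbb{Z}$, $\mathbb{N}$ or an interval) is $(\omega,\zeta)$, $\omega:I\to G$ injective, $\zeta:I\to A$, with $d\omega_i:=\omega(i)^{-1}\omega(i+1)\in S\cup S^{-1}$ and $(\zeta(i),\zeta(i+1),d\omega_i)\in B$ whenever $i,i+1\in I$. A $\Gamma$-ouroboros is such a pair on $\{0,\dots,n\}$, $n\ge3$, with $\omega$ injective on $\{0,\dots,n-1\}$ and $\omega(n)=\omega(0)$. The infinite snake problem (resp. ouroboros problem) for a group with generating set: given a tileset graph $\Gamma$, decide whether a $\Gamma$-snake on $\mathbb{Z}$ (resp. a $\Gamma$-ouroboros) exists. *)

(* Groups are MathComp's (possibly infinite) [groupType]
   from boot/monoid.v; computability is modelled by Kleene's partial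
   recursive functions on nat (defined below). *)
From HB Require Import structures.
From mathcomp Require Import all_boot all_order ssralg ssrint.
From mathcomp Require Export monoid.

Set Implicit Arguments.
Unset Strict Implicit.
Unset Printing Implicit Defensive.

(* Words over S ∪ S^{-1}: a letter is (s, true) for s, (s, false) for s^{-1}. *)

Definition letter_inv (S : Type) (l : S * bool) : S * bool := (l.1, ~~ l.2).

Section Words.
Local Open Scope group_scope.
Variables (G : groupType) (S : Type) (gen : S -> G).

Definition letter_val (l : S * bool) : G :=
  if l.2 then gen l.1 else (gen l.1)^-1.

Definition word_val (w : seq (S * bool)) : G :=
  foldr (fun l acc => letter_val l * acc) 1 w.

Definition generates : Prop := forall g : G, exists w, word_val w = g.
End Words.

Section Transducer.
Variables (Q : finType) (S T : Type) (delta : Q -> S -> Q) (eta : Q -> S -> T).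

Definition is_ir_transducer : Prop :=
  (forall q, injective (eta q)) /\
  (forall (q : Q) (s : S), exists! q', delta q' s = q).

Definition pred_state (q : Q) (s : S) : Q := odflt q [pick q' | delta q' s == q].

Definition tstep (q : Q) (l : S * bool) : Q :=
  if l.2 then delta q l.1 else pred_state q l.1.

Definition tout (q : Q) (l : S * bool) : T * bool :=
  if l.2 then (eta q l.1, true) else (eta (pred_state q l.1) l.1, false).

Fixpoint trans_fun (q : Q) (w : seq (S * bool)) : seq (T * bool) :=
  if w is l :: w' then tout q l :: trans_fun (tstep q l) w' else [::].
End Transducer.

Definition snake_embedding (G H : groupType) (S T : Type)
    (gS : S -> G) (gT : T -> H) (phi : G -> H) : Prop :=
  exists (Q : finType) (q0 : Q) (delta : Q -> S -> Q) (eta : Q -> S -> T),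
    is_ir_transducer delta eta /\
    (forall w, phi (word_val gS w) = word_val gT (trans_fun delta eta q0 w)) /\
    (forall w w', word_val gT (trans_fun delta eta q0 w) =
                  word_val gT (trans_fun delta eta q0 w')
                  <-> word_val gS w = word_val gS w').

(* Tileset graphs: tiles A = {0, ..., ntiles-1}, edges (a, a', letter). *)

Record tileset (L : Type) := Tileset { ntiles : nat; tedges : seq (nat * nat * L) }.

Definition tileset_wf (S : eqType) (Gam : tileset (S * bool)) : Prop :=
  forall a a' l, (a, a', l) \in tedges Gam ->
    [/\ a < ntiles Gam, a' < ntiles Gam & (a', a, letter_inv l) \in tedges Gam].

Section Snakes.
Local Open Scope group_scope.
Variables (G : groupType) (S : eqType) (gen : S -> G).

Definition edge_ok (Gam : tileset (S * bool)) (a a' : nat) (g : G) : Prop :=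
  exists l, letter_val gen l = g /\ (a, a', l) \in tedges Gam.

Definition has_Z_snake (Gam : tileset (S * bool)) : Prop :=
  exists (om : int -> G) (ze : int -> nat),
    injective om /\ (forall i, ze i < ntiles Gam) /\
    (forall i : int, edge_ok Gam (ze i) (ze (i + 1)%R) ((om i)^-1 * om (i + 1)%R)).

Definition has_ouroboros (Gam : tileset (S * bool)) : Prop :=
  exists (n : nat) (om : nat -> G) (ze : nat -> nat),
    3 <= n /\
    (forall i j, i < n -> j < n -> om i = om j -> i = j) /\
    om n = om 0 /\
    (forall i, i <= n -> ze i < ntiles Gam) /\
    (forall i, i < n -> edge_ok Gam (ze i) (ze i.+1) ((om i)^-1 * om i.+1)).
End Snakes.

Inductive recf : Type :=
| RZero
| RSucc
| RProj (i : nat)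
| RComp (f : recf) (gs : list recf)
| RPrim (f g : recf)
| RMu (f : recf).

Inductive reval : recf -> seq nat -> nat -> Prop :=
| ev_zero v : reval RZero v 0
| ev_succ x v : reval RSucc (x :: v) x.+1
| ev_proj i v : reval (RProj i) v (nth 0 v i)
| ev_comp f gs v ys y : revals gs v ys -> reval f ys y -> reval (RComp f gs) v y
| ev_prim0 f g v y : reval f v y -> reval (RPrim f g) (0 :: v) y
| ev_primS f g n v r y :
    reval (RPrim f g) (n :: v) r -> reval g (n :: r :: v) y ->
    reval (RPrim f g) (n.+1 :: v) y
| ev_mu f v n :
    reval f (n :: v) 0 -> (forall m, m < n -> exists k, reval f (m :: v) k.+1) ->
    reval (RMu f) v n
with revals : seq recf -> seq nat -> seq nat -> Prop :=
| evs_nil v : revals [::] v [::]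
| evs_cons g gs v y ys : reval g v y -> revals gs v ys -> revals (g :: gs) v (y :: ys).

Definition npair (x y : nat) : nat := ((x + y) * (x + y).+1)./2 + y.

Fixpoint enc_list (l : seq nat) : nat :=
  if l is x :: l' then (npair x (enc_list l')).+1 else 0.

Definition enc_letter (S : finType) (l : S * bool) : nat :=
  (enum_rank l.1).*2 + l.2.

Definition enc_tileset (S : finType) (Gam : tileset (S * bool)) : nat :=
  npair (ntiles Gam)
        (enc_list [seq npair e.1.1 (npair e.1.2 (enc_letter e.2)) | e <- tedges Gam]).

Definition many_one_reduces (S T : finType)
    (P1 : tileset (S * bool) -> Prop) (P2 : tileset (T * bool) -> Prop) : Prop :=
  exists F : tileset (S * bool) -> tileset (T * bool),
    (exists c : recf, forall Gam, reval c [:: enc_tileset Gam] (enc_tileset (F Gam))) /\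
    (forall Gam, tileset_wf Gam ->
       tileset_wf (F Gam) /\ (P1 Gam <-> P2 (F Gam))).

From HB Require Import structures.
From mathcomp Require Import all_boot all_order ssralg ssrint.
From mathcomp Require Import monoid zify.
From Stdlib Require Import ClassicalEpsilon.

Set Implicit Arguments.
Unset Strict Implicit.
Unset Printing Implicit Defensive.

(* Let M be the invertible-reversible transducer of the snake embedding, with
   initial state q0.  A tileset graph Gamma is sent to its product with the
   states of M reachable from q0: an edge (a, a', s) of Gamma and a state q
   give the edge ((a, q), (a', delta(q, s)), eta(q, s)).  A Gamma-snake (or
   ouroboros) omega is read along words w_i representing omega(i), with
   w_(i+1) = w_i s_i up to cancellation; then i |-> f_M(w_i), decorated with
   the states q_(w_i), is a snake in the product.  Conversely, as M is
   reversible, the tiles of a snake in the product determine the states along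
   it, so it is read back letter by letter from a word reaching its first
   state; the two paths have the same increments, hence differ by a
   translation.  In both directions injectivity and the closing condition
   transfer because f_M(w) = f_M(w') in H exactly when w = w' in G.  Finally
   the product is a primitive recursive function of the code of Gamma, M being
   finite data. *)

(** * Partial recursive functions *)

Definition computable (k : nat) (f : seq nat -> nat) : Prop :=
  exists c, forall v, size v = k -> reval c v (f v).

Notation computable1 f := (computable 1 (fun v => f (nth 0 v 0))).
Notation computable2 f := (computable 2 (fun v => f (nth 0 v 0) (nth 0 v 1))).

Lemma computable_ext k f g :
  computable k f -> (forall v, size v = k -> f v = g v) -> computable k g.
Proof. by move=> [c Hc] fg; exists c => v Hv; rewrite -fg //; apply: Hc. Qed.

Lemma computable_proj k i : computable k (fun v => nth 0 v i).
Proof. by exists (RProj i) => v _; constructor. Qed.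
Arguments computable_proj {k i}.

Lemma computable_zero k : computable k (fun _ => 0).
Proof. by exists RZero => v _; constructor. Qed.

Lemma computable_succ : computable1 S.
Proof. by exists RSucc => [[|x []]] // _; constructor. Qed.

Lemma computable_comp m k f (gs : seq (seq nat -> nat)) :
  computable m f -> size gs = m -> foldr (fun g P => computable k g /\ P) True gs ->
  computable k (fun v => f [seq g v | g <- gs]).
Proof.
move=> [c Hc] Hm Hgs.
have [cs Hcs] : exists cs, forall v, size v = k -> revals cs v [seq g v | g <- gs].
  elim: gs {Hm} Hgs => [_|g gs IH [[cg Hg] /IH [cs Hcs]]].
    by exists [::] => v _; constructor.
  by exists (cg :: cs) => v Hv; constructor; [apply: Hg | apply: Hcs].
by exists (RComp c cs) => v Hv; econstructor;
  [apply: Hcs | apply: Hc; rewrite size_map Hm].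
Qed.

Lemma computable_comp1 k (f : nat -> nat) g :
  computable1 f -> computable k g -> computable k (fun v => f (g v)).
Proof.
move=> Hf Hg.
by apply: computable_ext (@computable_comp 1 k _ [:: g] Hf erefl (conj Hg I)) _.
Qed.

Lemma computable_comp2 k (f : nat -> nat -> nat) g h :
  computable2 f -> computable k g -> computable k h ->
  computable k (fun v => f (g v) (h v)).
Proof.
move=> Hf Hg Hh.
by apply: computable_ext
  (@computable_comp 2 k _ [:: g; h] Hf erefl (conj Hg (conj Hh I))) _.
Qed.

Fixpoint primrec (f g : seq nat -> nat) (n : nat) (v : seq nat) : nat :=
  if n is n'.+1 then g (n' :: primrec f g n' v :: v) else f v.

Lemma computable_primrec k f g : computable k f -> computable k.+2 g ->
  computable k.+1 (fun v => primrec f g (head 0 v) (behead v)).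
Proof.
move=> [cf Hf] [cg Hg]; exists (RPrim cf cg) => [[|n v]] //= [Hv].
elim: n => [|n IH] /=; first by constructor; apply: Hf.
by econstructor; [apply: IH | apply: Hg => /=; rewrite Hv].
Qed.

Lemma computable_const k n : computable k (fun _ => n).
Proof.
elim: n => [|n IH]; [exact: computable_zero | exact: computable_comp1 computable_succ IH].
Qed.

Lemma computable_add : computable2 addn.
Proof.
have H := computable_primrec (computable_proj (k := 1) (i := 0))
  (computable_comp1 computable_succ (computable_proj (k := 3) (i := 1))).
apply: computable_ext H _ => [[|n [|y []]]] // _.
by elim: n => //= n ->.
Qed.

Lemma computable_mul : computable2 muln.
Proof.
have H := computable_primrec (computable_zero 1) (computable_comp2 computable_add
  (computable_proj (k := 3) (i := 1)) (computable_proj (k := 3) (i := 2))).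
apply: computable_ext H _ => [[|n [|y []]]] // _.
by elim: n => //= n ->; rewrite mulSn addnC.
Qed.

Lemma computable_pred : computable1 predn.
Proof.
have H := computable_primrec (computable_zero 0) (computable_proj (k := 2) (i := 0)).
by apply: computable_ext H _ => [[|[|n] []]].
Qed.

Lemma computable_sub : computable2 subn.
Proof.
have H := computable_primrec (computable_proj (k := 1) (i := 0))
  (computable_comp1 computable_pred (computable_proj (k := 3) (i := 1))).
have sub_rev : computable 2 (fun v => nth 0 v 1 - nth 0 v 0).
  apply: computable_ext H _ => [[|n [|y []]]] // _.
  by elim: n => [|n /= ->]; rewrite ?subn0 // subnS.
exact: (@computable_comp2 2 (fun n m => m - n) _ _ sub_rev
  computable_proj computable_proj).
Qed.

Lemma computable_leq : computable2 (fun m n => nat_of_bool (m <= n)).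
Proof.
apply: computable_ext (computable_comp2 computable_sub (computable_const 2 1)
  computable_sub) _ => v _.
by rewrite /leq; case: (nth 0 v 0 - _).
Qed.

Lemma computable_eventually_zero (f : nat -> nat) N :
  (forall n, N <= n -> f n = 0) -> computable1 f.
Proof.
move=> fN; have Htab : computable1 (nth 0 [seq f i | i <- iota 0 N]).
  elim: [seq f i | i <- iota 0 N] => [|x t IH].
    by apply: computable_ext (computable_zero 1) _ => v _; rewrite nth_nil.
  have H := computable_primrec (computable_const 0 x)
    (computable_comp1 IH (computable_proj (k := 2) (i := 0))).
  by apply: computable_ext H _ => [[|[|n] []]].
apply: computable_ext Htab _ => v _; case: (ltnP (nth 0 v 0) N) => HN.
  by rewrite (nth_map 0) ?size_iota // nth_iota.
by rewrite nth_default ?size_map ?size_iota // fN.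
Qed.

(** * Coding of pairs and lists *)

Fixpoint tri (s : nat) : nat := if s is s'.+1 then tri s' + s else 0.

Lemma triE s : tri s = (s * s.+1)./2.
Proof.
elim: s => // s IH; rewrite [LHS]/= IH.
have -> : s.+1 * s.+2 = s * s.+1 + s.+1.*2 by rewrite -mul2n; lia.
by rewrite halfD odd_double andbF doubleK.
Qed.

Lemma npairE x y : npair x y = tri (x + y) + y.
Proof. by rewrite /npair triE. Qed.

Lemma tri_mono : {mono tri : m n / m <= n}.
Proof.
apply: leq_mono; apply: homo_ltn => [n m p|n]; first exact: ltn_trans.
by rewrite [tri _.+1]/= addnS ltnS leq_addr.
Qed.

Lemma tri_ltn_mono : {mono tri : m n / m < n}.
Proof. exact: leqW_mono tri_mono. Qed.

(* The index of the diagonal of the Cantor enumeration on which [z] lies. *)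
Fixpoint tri_root (z : nat) : nat :=
  if z is z'.+1 then tri_root z' + (tri (tri_root z').+1 <= z) else 0.

Lemma tri_root_spec z : tri (tri_root z) <= z < tri (tri_root z).+1.
Proof.
elim: z => // z; rewrite [tri_root z.+1]/=; set s := tri_root z => /andP[lo hi].
have tri_s1 : tri s.+1 = tri s + s.+1 by [].
have tri_s2 : tri s.+2 = tri s.+1 + s.+2 by [].
by case: (leqP (tri s.+1) z.+1) => ?; rewrite ?addn1 ?addn0; lia.
Qed.

Lemma tri_root_unique s z : tri s <= z < tri s.+1 -> tri_root z = s.
Proof.
move=> /andP[lo hi]; have /andP[lo' hi'] := tri_root_spec z.
apply/eqP; rewrite eqn_leq -ltnS -tri_ltn_mono (leq_ltn_trans lo' hi) /=.
by rewrite -ltnS -tri_ltn_mono (leq_ltn_trans lo hi').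
Qed.

Definition nsnd (z : nat) : nat := z - tri (tri_root z).
Definition nfst (z : nat) : nat := tri_root z - nsnd z.

Lemma tri_root_npair x y : tri_root (npair x y) = x + y.
Proof.
by apply: tri_root_unique; rewrite npairE /= leq_addr /= addnS ltnS leq_add2l leq_addl.
Qed.

Lemma nsnd_npair x y : nsnd (npair x y) = y.
Proof. by rewrite /nsnd tri_root_npair npairE addKn. Qed.

Lemma nfst_npair x y : nfst (npair x y) = x.
Proof. by rewrite /nfst nsnd_npair tri_root_npair addnK. Qed.

Lemma computable_tri : computable1 tri.
Proof.
have H := computable_primrec (computable_zero 0) (computable_comp2 computable_add
  (computable_proj (k := 2) (i := 1))
  (computable_comp1 computable_succ (computable_proj (k := 2) (i := 0)))).
by apply: computable_ext H _ => [[|n []]] // _; elim: n => //= n ->.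
Qed.

Lemma computable_npair : computable2 npair.
Proof.
apply: computable_ext (computable_comp2 computable_add
  (computable_comp1 computable_tri computable_add) (computable_proj (i := 1))) _.
by move=> v _; rewrite npairE.
Qed.

Lemma computable_tri_root : computable1 tri_root.
Proof.
have H := computable_primrec (computable_zero 0) (computable_comp2 computable_add
  (computable_proj (k := 2) (i := 1))
  (computable_comp2 computable_leq
    (computable_comp1 computable_tri
      (computable_comp1 computable_succ (computable_proj (i := 1))))
    (computable_comp1 computable_succ (computable_proj (i := 0))))).
by apply: computable_ext H _ => [[|n []]] // _; elim: n => //= n ->.
Qed.

Lemma computable_nsnd : computable1 nsnd.
Proof.
exact: computable_comp2 computable_sub computable_proj
  (computable_comp1 computable_tri computable_tri_root).
Qed.

Lemma computable_nfst : computable1 nfst.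
Proof. exact: computable_comp2 computable_sub computable_tri_root computable_nsnd. Qed.

Definition lcons (x L : nat) : nat := (npair x L).+1.
Definition lhead (L : nat) : nat := nfst L.-1.
Definition ltail (L : nat) : nat := nsnd L.-1.
Definition ldrop (k L : nat) : nat := iter k ltail L.

Lemma lhead_cons x l : lhead (enc_list (x :: l)) = x.
Proof. exact: nfst_npair. Qed.

Lemma ldropE k l : ldrop k (enc_list l) = enc_list (drop k l).
Proof.
elim: k l => [|k IH] l; first by rewrite drop0.
rewrite /ldrop iterSr -/(ldrop k _); case: l => [|x l]; first exact: (IH [::]).
by rewrite /ltail [enc_list _]/= succnK nsnd_npair IH.
Qed.

Fixpoint lsize_upto (k L : nat) : nat :=
  if k is k'.+1 then lsize_upto k' L + (0 < ldrop k' L) else 0.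

(* A list never has more items than its code. *)
Definition lsize (L : nat) : nat := lsize_upto L L.

Lemma size_le_enc_list l : size l <= enc_list l.
Proof. by elim: l => //= x l IH; rewrite ltnS npairE (leq_trans IH) ?leq_addl. Qed.

Lemma lsizeE l : lsize (enc_list l) = size l.
Proof.
suff upto k : lsize_upto k (enc_list l) = minn k (size l).
  by rewrite /lsize upto; apply/minn_idPr/size_le_enc_list.
elim: k => [|k /= ->]; first by rewrite min0n.
rewrite ldropE.
case: (ltnP k (size l)) => lt_k.
  by rewrite (drop_nth 0 lt_k) /=; lia.
by rewrite drop_oversize //=; lia.
Qed.

Lemma computable_lcons : computable2 lcons.
Proof. exact: computable_comp1 computable_succ computable_npair. Qed.

Lemma computable_lhead : computable1 lhead.
Proof. exact: computable_comp1 computable_nfst computable_pred. Qed.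

Lemma computable_ltail : computable1 ltail.
Proof. exact: computable_comp1 computable_nsnd computable_pred. Qed.

Lemma computable_ldrop : computable2 ldrop.
Proof.
have H := computable_primrec (computable_proj (k := 1) (i := 0))
  (computable_comp1 computable_ltail (computable_proj (k := 3) (i := 1))).
by apply: computable_ext H _ => [[|n [|L []]]] // _; elim: n => //= n ->.
Qed.

Lemma computable_lsize : computable1 lsize.
Proof.
have H := computable_primrec (computable_zero 1) (computable_comp2 computable_add
  (computable_proj (k := 3) (i := 1))
  (computable_comp2 computable_leq (computable_const 3 1)
    (computable_comp2 computable_ldrop (computable_proj (i := 0))
      (computable_proj (i := 2))))).
have Hupto : computable2 lsize_upto.
  by apply: computable_ext H _ => [[|n [|L []]]] // _; elim: n => //= n ->.
exact: computable_comp2 Hupto computable_proj computable_proj.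
Qed.

Section ListFold.
Variables (h : nat -> nat -> nat) (h_computable : computable2 h).

(* The list is a fixed parameter of the primitive recursion:
   [lfoldr_upto j (enc_list l)] folds [h] over the last [j] items of [l]. *)
Fixpoint lfoldr_upto (j L : nat) : nat :=
  if j is j'.+1 then h (lhead (ldrop (lsize L - j) L)) (lfoldr_upto j' L) else 0.

Definition lfoldr (L : nat) : nat := lfoldr_upto (lsize L) L.

Lemma lfoldrE l : lfoldr (enc_list l) = foldr h 0 l.
Proof.
suff upto j : j <= size l ->
    lfoldr_upto j (enc_list l) = foldr h 0 (drop (size l - j) l).
  by rewrite /lfoldr lsizeE upto // subnn drop0.
elim: j => [|j IH] le_j /=; first by rewrite subn0 drop_size.
rewrite IH ?(ltnW le_j) // lsizeE ldropE.
rewrite (drop_nth 0 (_ : size l - j.+1 < size l)); last by lia.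
by rewrite lhead_cons; congr (h _ (foldr h 0 (drop _ l))); lia.
Qed.

Lemma computable_lfoldr : computable1 lfoldr.
Proof.
have H := computable_primrec (computable_zero 1) (computable_comp2 h_computable
  (computable_comp1 computable_lhead (computable_comp2 computable_ldrop
    (computable_comp2 computable_sub
      (computable_comp1 computable_lsize (computable_proj (i := 2)))
      (computable_comp1 computable_succ (computable_proj (i := 0))))
    (computable_proj (i := 2))))
  (computable_proj (k := 3) (i := 1))).
have Hupto : computable2 lfoldr_upto.
  by apply: computable_ext H _ => [[|n [|L []]]] // _; elim: n => //= n ->.
exact: computable_comp2 Hupto computable_lsize computable_proj.
Qed.
End ListFold.

(** * Words and reversible transducers *)

Lemma letter_invK (S : Type) : involutive (@letter_inv S).
Proof. by case=> s b; rewrite /letter_inv /= negbK. Qed.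

Section Words.
Local Open Scope group_scope.
Variables (G : groupType) (S : Type) (gen : S -> G).

Lemma word_val_rcons w l : word_val gen (rcons w l) = word_val gen w * letter_val gen l.
Proof. by elim: w => [|l' w IH] /=; rewrite ?mul1g ?mulg1 // IH mulgA. Qed.

Lemma letter_val_inv l : letter_val gen (letter_inv l) = (letter_val gen l)^-1.
Proof. by case: l => s []; rewrite /letter_val /= ?invgK. Qed.

Definition word_step (w : seq (S * bool)) (l : S * bool) (w' : seq (S * bool)) : Prop :=
  w' = rcons w l \/ w = rcons w' (letter_inv l).

Lemma word_step_val w l w' :
  word_step w l w' -> word_val gen w' = word_val gen w * letter_val gen l.
Proof. by case=> ->; rewrite word_val_rcons ?letter_val_inv ?mulgVK. Qed.

(* The word at time [i] of the walk that starts from [u] at time [0] and reads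
   [l i] between times [i] and [i + 1]; negative times undo letters. *)
Definition int_walk (u : seq (S * bool)) (l : int -> S * bool) (i : int) :
    seq (S * bool) :=
  match i with
  | Posz n => u ++ mkseq (fun k => l (Posz k)) n
  | Negz n => u ++ mkseq (fun k => letter_inv (l (Negz k))) n.+1
  end.

Lemma int_walk0 u l : int_walk u l 0 = u.
Proof. exact: cats0. Qed.

Lemma int_walk_step u l i : word_step (int_walk u l i) (l i) (int_walk u l (i + 1)).
Proof.
case: i => [n|[|n]].
- by left; rewrite -PoszD addn1 /= mkseqS rcons_cat.
- by right; rewrite /= cats0 cats1.
- right; rewrite (_ : Negz n.+1 + 1 = Negz n)%R /= ?mkseqS ?rcons_cat //.
  by rewrite !NegzE; lia.
Qed.

Definition nat_walk (u : seq (S * bool)) (l : nat -> S * bool) (i : nat) :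
    seq (S * bool) :=
  u ++ mkseq l i.

Lemma nat_walk_step u l i : word_step (nat_walk u l i) (l i) (nat_walk u l i.+1).
Proof. by left; rewrite /nat_walk mkseqS rcons_cat. Qed.
End Words.

Lemma int_orbit_eq (X : Type) (g : int -> X -> X) (x y : int -> X) :
  (forall i, injective (g i)) -> x 0%R = y 0%R ->
  (forall i, x (i + 1)%R = g i (x i)) -> (forall i, y (i + 1)%R = g i (y i)) ->
  x =1 y.
Proof.
move=> g_inj xy0 xS yS; elim/int_rect => // n IH.
  by rewrite -[n.+1]addn1 PoszD xS yS IH.
apply: (g_inj (- n.+1%:Z)%R); rewrite -xS -yS.
by rewrite (_ : - n.+1%:Z + 1 = - n%:Z)%R //; lia.
Qed.

Lemma nat_orbit_eq (X : Type) (g : nat -> X -> X) (x y : nat -> X) n :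
  x 0 = y 0 -> (forall i, i < n -> x i.+1 = g i (x i)) ->
  (forall i, i < n -> y i.+1 = g i (y i)) -> forall i, i <= n -> x i = y i.
Proof. by move=> xy0 xS yS; elim=> // i IH lt_i; rewrite xS // yS // IH // ltnW. Qed.

Section Transducer.
Variables (Q : finType) (S T : Type) (delta : Q -> S -> Q) (eta : Q -> S -> T).
Hypothesis M_ir : is_ir_transducer delta eta.

Lemma pred_stateK q s : delta (pred_state delta q s) s = q.
Proof.
rewrite /pred_state; case: pickP => [q' /eqP //|none].
by have [q' [def_q _]] := M_ir.2 q s; move: (none q'); rewrite /= def_q eqxx.
Qed.

Lemma pred_state_delta q s : pred_state delta (delta q s) s = q.
Proof.
have [q' [_ uniq]] := M_ir.2 (delta q s) s.
by rewrite -(uniq _ (pred_stateK _ _)) (uniq q).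
Qed.

Lemma tstepK l : cancel (tstep delta ^~ l) (tstep delta ^~ (letter_inv l)).
Proof. by case: l => s [] q; rewrite /tstep /= ?pred_state_delta ?pred_stateK. Qed.

Lemma tstep_inj l : injective (tstep delta ^~ l).
Proof. exact: can_inj (tstepK l). Qed.

Lemma tout_inv q l :
  tout delta eta (tstep delta q l) (letter_inv l) = letter_inv (tout delta eta q l).
Proof. by case: l => s []; rewrite /tout /tstep /letter_inv /= ?pred_state_delta. Qed.

Lemma trans_fun_rcons q w l : trans_fun delta eta q (rcons w l) =
  rcons (trans_fun delta eta q w) (tout delta eta (foldl (tstep delta) q w) l).
Proof. by elim: w q => [|l' w IH] q //=; rewrite IH. Qed.
End Transducer.

(** * The product tileset and its computability *)

Definition enc_edge (L : finType) (e : nat * nat * (L * bool)) : nat :=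
  npair e.1.1 (npair e.1.2 (enc_letter e.2)).

Definition dec_letter (L : finType) (k : nat) : option (L * bool) :=
  [pick l | enc_letter l == k].

Lemma enc_letter_inj (L : finType) : injective (@enc_letter L).
Proof.
move=> [s b] [s' b']; rewrite /enc_letter /= => E.
have := congr1 half E; have := congr1 odd E.
rewrite ![_.*2 + _]addnC !half_bit_double !oddD !odd_double !addbF !oddb => -> E'.
by rewrite (enum_rank_inj (val_inj E')).
Qed.

Lemma enc_letter_lt (L : finType) (l : L * bool) : enc_letter l < #|L|.*2.
Proof.
rewrite /enc_letter (@leq_trans (enum_rank l.1).+1.*2) //.
  by rewrite -!muln2; case: l.2 => /=; lia.
by rewrite leq_double; exact: ltn_ord.
Qed.

Lemma dec_letter_enc (L : finType) (l : L * bool) : dec_letter L (enc_letter l) = Some l.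
Proof.
rewrite /dec_letter; case: pickP => [l' /eqP /enc_letter_inj -> // | none].
by move: (none l); rewrite eqxx.
Qed.

Lemma dec_letter_out (L : finType) k : #|L|.*2 <= k -> dec_letter L k = None.
Proof.
rewrite /dec_letter => le_k; case: pickP => // l /eqP def_k.
by move: (enc_letter_lt l); rewrite def_k ltnNge le_k.
Qed.

Section ProductTileset.
Variables (Q : finType) (q0 : Q) (S T : finType).
Variables (delta : Q -> S -> Q) (eta : Q -> S -> T).
Hypothesis M_ir : is_ir_transducer delta eta.

Definition state_of (w : seq (S * bool)) : Q := foldl (tstep delta) q0 w.

Definition reachable (q : Q) : Prop := exists w, state_of w = q.

Definition reachable_states : seq Q :=
  [seq q <- enum Q | excluded_middle_informative (reachable q)].

Lemma mem_reachable_states q : q \in reachable_states <-> reachable q.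
Proof. by rewrite mem_filter mem_enum andbT; case: excluded_middle_informative. Qed.

Lemma reachable_tstep q l : reachable q -> reachable (tstep delta q l).
Proof. by case=> w <-; exists (rcons w l); rewrite /state_of foldl_rcons. Qed.

Definition ptile (a : nat) (q : Q) : nat := a * #|Q| + enum_rank q.

Lemma ptile_divn a q : ptile a q %/ #|Q| = a.
Proof.
rewrite /ptile divnMDl ?divn_small ?addn0 //.
exact: leq_ltn_trans (ltn_ord (enum_rank q)).
Qed.

Lemma ptile_inj a a' q q' : ptile a q = ptile a' q' -> a = a' /\ q = q'.
Proof.
move=> E; split; first by rewrite -(ptile_divn a q) E ptile_divn.
apply/enum_rank_inj/val_inj; move: (congr1 (modn^~ #|Q|) E).
by rewrite /ptile !modnMDl !modn_small.
Qed.

Lemma ptile_lt a q n : a < n -> ptile a q < n * #|Q|.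
Proof. by have rank_lt : enum_rank q < #|Q| := ltn_ord _; rewrite /ptile; nia. Qed.

Definition lift_edge (q : Q) (e : nat * nat * (S * bool)) : nat * nat * (T * bool) :=
  (ptile e.1.1 q, ptile e.1.2 (tstep delta q e.2), tout delta eta q e.2).

Definition product_tileset (Gam : tileset (S * bool)) : tileset (T * bool) :=
  Tileset (ntiles Gam * #|Q|)
    [seq lift_edge q e | e <- tedges Gam, q <- reachable_states].

Lemma mem_product_tileset Gam x : x \in tedges (product_tileset Gam) ->
  exists e q, [/\ e \in tedges Gam, reachable q & x = lift_edge q e].
Proof.
by case/allpairsP=> [[e q] [/= e_in /mem_reachable_states q_reach ->]]; exists e, q.
Qed.

Lemma lift_edge_mem Gam e q :
  e \in tedges Gam -> reachable q -> lift_edge q e \in tedges (product_tileset Gam).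
Proof. by move=> e_in /mem_reachable_states q_in; apply: allpairs_f. Qed.

Lemma product_tileset_wf Gam : tileset_wf Gam -> tileset_wf (product_tileset Gam).
Proof.
move=> wf a a' t /mem_product_tileset [[[b b'] l] [q [e_in q_reach [-> -> ->]]]].
have [lt_b lt_b' inv_in] := wf _ _ _ e_in; split; rewrite ?ptile_lt //.
have -> : (ptile b' (tstep delta q l), ptile b q, letter_inv (tout delta eta q l))
    = lift_edge (tstep delta q l) (b', b, letter_inv l).
  by rewrite /lift_edge /= (tstepK M_ir) (tout_inv M_ir).
exact/lift_edge_mem/reachable_tstep.
Qed.

Definition next_rank_code (q : Q) (k : nat) : nat :=
  if dec_letter S k is Some l then enum_rank (tstep delta q l) else 0.

Definition out_code (q : Q) (k : nat) : nat :=
  if dec_letter S k is Some l then enc_letter (tout delta eta q l) else 0.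

Definition lift_edge_code (q : Q) (c : nat) : nat :=
  npair (ptile (nfst c) q)
    (npair (nfst (nsnd c) * #|Q| + next_rank_code q (nsnd (nsnd c)))
           (out_code q (nsnd (nsnd c)))).

Lemma lift_edge_codeE q e : lift_edge_code q (enc_edge e) = enc_edge (lift_edge q e).
Proof.
rewrite /lift_edge_code /enc_edge !nsnd_npair !nfst_npair.
by rewrite /next_rank_code /out_code dec_letter_enc.
Qed.

Definition lift_edges_code (qs : seq Q) (c L : nat) : nat :=
  foldr (fun q => lcons (lift_edge_code q c)) L qs.

Lemma lift_edges_codeE qs e l : lift_edges_code qs (enc_edge e) (enc_list l) =
  enc_list ([seq enc_edge (lift_edge q e) | q <- qs] ++ l).
Proof. by elim: qs => //= q qs ->; rewrite lift_edge_codeE. Qed.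

Definition product_code (x : nat) : nat :=
  npair (nfst x * #|Q|) (lfoldr (lift_edges_code reachable_states) (nsnd x)).

Lemma product_codeE Gam :
  product_code (enc_tileset Gam) = enc_tileset (product_tileset Gam).
Proof.
rewrite /product_code /enc_tileset nfst_npair nsnd_npair lfoldrE; congr npair => /=.
elim: (tedges Gam) => //= e E ->.
by rewrite -/(enc_edge e) lift_edges_codeE map_cat -map_comp.
Qed.

Lemma computable_lift_edge_code q : computable1 (lift_edge_code q).
Proof.
have c_times g : computable 1 g -> computable 1 (fun v => g v * #|Q|).
  by move=> cg; apply: computable_comp2 computable_mul cg (computable_const 1 _).
have c_letter f : (forall k, #|S|.*2 <= k -> f k = 0) ->
    computable 1 (fun v => f (nsnd (nsnd (nth 0 v 0)))).
  move=> f0; apply: computable_comp1 (computable_eventually_zero f0) _.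
  exact: computable_comp1 computable_nsnd computable_nsnd.
apply: computable_comp2 computable_npair _ _.
  apply: computable_comp2 computable_add _ (computable_const 1 _).
  exact/c_times/computable_nfst.
apply: computable_comp2 computable_npair _ _.
  apply: computable_comp2 computable_add _ _.
    exact/c_times/(computable_comp1 computable_nfst computable_nsnd).
  by apply: c_letter => k /dec_letter_out; rewrite /next_rank_code => ->.
by apply: c_letter => k /dec_letter_out; rewrite /out_code => ->.
Qed.

Lemma computable_lift_edges_code qs : computable2 (lift_edges_code qs).
Proof.
elim: qs => [|q qs IH]; first exact: computable_proj.
exact: computable_comp2 computable_lcons
  (computable_comp1 (computable_lift_edge_code q) computable_proj) IH.
Qed.

Lemma computable_product_code : computable1 product_code.
Proof.
apply: computable_comp2 computable_npair
  (computable_comp2 computable_mul (computable_comp1 computable_nfst computable_proj)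
    (computable_const 1 _)) _.
exact: computable_comp1 (computable_lfoldr (computable_lift_edges_code _))
  (computable_comp1 computable_nsnd computable_proj).
Qed.

Lemma many_one_reduces_product P1 P2 :
  (forall Gam, tileset_wf Gam -> P1 Gam <-> P2 (product_tileset Gam)) ->
  many_one_reduces P1 P2.
Proof.
move=> P12; exists product_tileset; split=> [|Gam wf].
  have [c Hc] := computable_product_code.
  by exists c => Gam; rewrite -product_codeE; apply: Hc.
by split; [apply: product_tileset_wf | apply: P12].
Qed.
End ProductTileset.

(** * Transfer of snakes and ouroboroi *)

Lemma bounded_choice (B : Type) (P : nat -> B -> Prop) n : 0 < n ->
  (forall i, i < n -> exists b, P i b) ->
  exists f : nat -> B, forall i, i < n -> P i (f i).
Proof.
move=> n_gt0 exP; have [b0 _] := exP 0 n_gt0.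
apply: (choice (fun i b => i < n -> P i b)) => i.
by case: (ltnP i n) => [/exP [b Pb] | _]; [exists b | exists b0].
Qed.

Lemma wf_edge_tiles (L : eqType) (Gam : tileset (L * bool)) e :
  tileset_wf Gam -> e \in tedges Gam -> e.1.1 < ntiles Gam /\ e.1.2 < ntiles Gam.
Proof. by case: e => [[a a'] l] wf /wf []. Qed.

Section SnakeTransfer.
Local Open Scope group_scope.
Variables (G H : groupType) (S T : finType) (gS : S -> G) (gT : T -> H).
Variables (Q : finType) (q0 : Q) (delta : Q -> S -> Q) (eta : Q -> S -> T).
Hypothesis M_ir : is_ir_transducer delta eta.
Hypothesis genS : generates gS.

Local Notation state := (state_of q0 delta).
Local Notation reachable := (reachable q0 delta).
Local Notation product_tileset := (product_tileset q0 delta eta).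

Lemma word_step_state w l w' : word_step w l w' -> state w' = tstep delta (state w) l.
Proof.
case=> ->; rewrite /state_of foldl_rcons //.
by rewrite -{2}[l]letter_invK (tstepK M_ir).
Qed.

Definition trans_val (w : seq (S * bool)) : H :=
  word_val gT (trans_fun delta eta q0 w).

Hypothesis M_embeds :
  forall w w', trans_val w = trans_val w' <-> word_val gS w = word_val gS w'.

Lemma word_step_trans_val w l w' : word_step w l w' ->
  trans_val w' = trans_val w * letter_val gT (tout delta eta (state w) l).
Proof.
case=> ->; rewrite /trans_val trans_fun_rcons word_val_rcons // /state_of foldl_rcons.
have := tout_inv M_ir (foldl (tstep delta) q0 w') (letter_inv l).
by rewrite letter_invK => ->; rewrite letter_val_inv mulgK.
Qed.

Lemma lift_edge_ok Gam w l w' a a' : word_step w l w' -> (a, a', l) \in tedges Gam ->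
  edge_ok gT (product_tileset Gam) (ptile a (state w)) (ptile a' (state w'))
    ((trans_val w)^-1 * trans_val w').
Proof.
move=> step e_in; exists (tout delta eta (state w) l).
rewrite (word_step_trans_val step) mulKg (word_step_state step); split=> //.
have w_reach : reachable (state w) by exists w.
exact (lift_edge_mem eta e_in w_reach).
Qed.

Definition preimage_edge Gam t t' h (e : nat * nat * (S * bool)) (q : Q) : Prop :=
  [/\ e \in tedges Gam, reachable q, t = ptile e.1.1 q,
      t' = ptile e.1.2 (tstep delta q e.2) & letter_val gT (tout delta eta q e.2) = h].

Lemma edge_ok_product Gam t t' h : edge_ok gT (product_tileset Gam) t t' h ->
  exists p : nat * nat * (S * bool) * Q, preimage_edge Gam t t' h p.1 p.2.
Proof.
case=> x [<- /mem_product_tileset [e [q [e_in q_reach [-> -> ->]]]]].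
by exists (e, q).
Qed.

Lemma preimage_edge_tiles Gam t t' h e q : tileset_wf Gam ->
  preimage_edge Gam t t' h e q ->
  [/\ (t %/ #|Q|, t' %/ #|Q|, e.2) \in tedges Gam,
      t %/ #|Q| < ntiles Gam & t' %/ #|Q| < ntiles Gam].
Proof.
move=> wf [e_in _ -> -> _]; rewrite !ptile_divn.
have [lt_a lt_a'] := wf_edge_tiles wf e_in.
by case: e e_in lt_a lt_a' => [[a a'] l].
Qed.

Lemma preimage_edge_next Gam t t' t'' h h' e e' q q' :
  preimage_edge Gam t t' h e q -> preimage_edge Gam t' t'' h' e' q' ->
  q' = tstep delta q e.2.
Proof. by move=> [_ _ _ -> _] [_ _ /ptile_inj [_ ->] _ _]. Qed.

Lemma has_Z_snake_product Gam :
  has_Z_snake gS Gam -> has_Z_snake gT (product_tileset Gam).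
Proof.
move=> [om [ze [om_inj [ze_lt om_edge]]]].
have [l Hl] := choice _ om_edge; have [u Hu] := genS (om 0%R).
pose W := int_walk u l.
have W_val : forall i, word_val gS (W i) = om i.
  apply: (int_orbit_eq (g := fun i x => x * letter_val gS (l i))
    (x := fun i => word_val gS (W i))) => [i|||i].
  - exact: mulIg.
  - by rewrite /W int_walk0.
  - by move=> i; rewrite /W (word_step_val gS (int_walk_step u l i)).
  - by rewrite (Hl i).1 mulVKg.
exists (trans_val \o W), (fun i => ptile (ze i) (state (W i))); split; [|split].
- by move=> i j /M_embeds; rewrite !W_val => /om_inj.
- by move=> i; apply: ptile_lt.
- by move=> i; apply: lift_edge_ok (int_walk_step u l i) (Hl i).2.
Qed.

Lemma has_Z_snake_of_product Gam : tileset_wf Gam ->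
  has_Z_snake gT (product_tileset Gam) -> has_Z_snake gS Gam.
Proof.
move=> wf [om' [ze' [om'_inj [_ om'_edge]]]].
have [p Hp] := choice _ (fun i => edge_ok_product (om'_edge i)).
pose l i := (p i).1.2.
have [_ [u Hu] _ _ _] := Hp 0%R.
pose W := int_walk u l.
have W_state : forall i, state (W i) = (p i).2.
  apply: (int_orbit_eq (g := fun i q => tstep delta q (l i))
    (x := fun i => state (W i))) => [i|||i].
  - exact: tstep_inj M_ir _.
  - by rewrite /W int_walk0.
  - by move=> i; apply: word_step_state (int_walk_step u l i).
  - exact: preimage_edge_next (Hp i) (Hp (i + 1)%R).
pose C := trans_val u * (om' 0%R)^-1.
have W_trans_val : forall i, trans_val (W i) = C * om' i.
  apply: (int_orbit_eq (g := fun i x => x * ((om' i)^-1 * om' (i + 1)%R))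
    (x := fun i => trans_val (W i))) => [i|||i].
  - exact: mulIg.
  - by rewrite /W int_walk0 mulgVK.
  - move=> i /=; rewrite (word_step_trans_val (int_walk_step u l i)).
    by have [_ _ _ _ <-] := Hp i; rewrite W_state.
  - by rewrite -[RHS]mulgA mulVKg.
exists (fun i => word_val gS (W i)), (fun i => ze' i %/ #|Q|); split; [|split].
- by move=> i j /M_embeds; rewrite !W_trans_val => /mulgI /om'_inj.
- by move=> i; have [] := preimage_edge_tiles wf (Hp i).
move=> i; exists (l i); split.
  by rewrite (word_step_val gS (int_walk_step u l i)) mulKg.
by have [] := preimage_edge_tiles wf (Hp i).
Qed.

Lemma has_ouroboros_product Gam :
  has_ouroboros gS Gam -> has_ouroboros gT (product_tileset Gam).
Proof.
move=> [n [om [ze [n_ge3 [om_inj [om_n [ze_lt om_edge]]]]]]].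
have n_gt0 : 0 < n by apply: leq_trans n_ge3.
have [l Hl] := bounded_choice n_gt0 om_edge.
have [u Hu] := genS (om 0); pose W := nat_walk u l.
have W_val : forall i, i <= n -> word_val gS (W i) = om i.
  apply: (nat_orbit_eq (g := fun i x => x * letter_val gS (l i))
    (x := fun i => word_val gS (W i))) => [|i _|i lt_i].
  - by rewrite /W /nat_walk cats0.
  - by rewrite /W (word_step_val gS (nat_walk_step u l i)).
  - by rewrite (Hl i lt_i).1 mulVKg.
exists n, (fun i => trans_val (W i)), (fun i => ptile (ze i) (state (W i))).
split=> //; split; [|split; [|split]].
- move=> i j lt_i lt_j /M_embeds.
  by rewrite (W_val i (ltnW lt_i)) (W_val j (ltnW lt_j)); apply: om_inj.
- by apply/M_embeds; rewrite !W_val.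
- by move=> i le_i; apply/ptile_lt/ze_lt.
- by move=> i lt_i; apply: lift_edge_ok (nat_walk_step u l i) (Hl i lt_i).2.
Qed.

Lemma has_ouroboros_of_product Gam : tileset_wf Gam ->
  has_ouroboros gT (product_tileset Gam) -> has_ouroboros gS Gam.
Proof.
move=> wf [n [om' [ze' [n_ge3 [om'_inj [om'_n [_ om'_edge]]]]]]].
have n_gt0 : 0 < n by apply: leq_trans n_ge3.
have [p Hp] :=
  bounded_choice n_gt0 (fun i lt_i => edge_ok_product (om'_edge i lt_i)).
pose l i := (p i).1.2.
have [_ [u Hu] _ _ _] := Hp 0 n_gt0.
pose W := nat_walk u l.
have W_state : forall i, i <= n.-1 -> state (W i) = (p i).2.
  apply: (nat_orbit_eq (g := fun i q => tstep delta q (l i))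
    (x := fun i => state (W i))) => [|i _|i lt_i].
  - by rewrite /W /nat_walk cats0.
  - exact: word_step_state (nat_walk_step u l i).
  - by apply: preimage_edge_next (Hp i _) (Hp i.+1 _); lia.
pose C := trans_val u * (om' 0)^-1.
have W_trans_val : forall i, i <= n -> trans_val (W i) = C * om' i.
  apply: (nat_orbit_eq (g := fun i x => x * ((om' i)^-1 * om' i.+1))
    (x := fun i => trans_val (W i))) => [|i lt_i|i _].
  - by rewrite /W /nat_walk cats0 mulgVK.
  - rewrite (word_step_trans_val (nat_walk_step u l i)) W_state; last by lia.
    by have [_ _ _ _ ->] := Hp i lt_i.
  - by rewrite -[RHS]mulgA mulVKg.
exists n, (fun i => word_val gS (W i)), (fun i => ze' i %/ #|Q|).
split=> //; split; [|split; [|split]].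
- move=> i j lt_i lt_j /M_embeds.
  rewrite (W_trans_val i (ltnW lt_i)) (W_trans_val j (ltnW lt_j)) => /mulgI.
  exact: om'_inj.
- by apply/M_embeds; rewrite !W_trans_val // om'_n.
- move=> i; rewrite leq_eqVlt => /predU1P [-> | lt_i].
    rewrite -(prednK n_gt0).
    by have [] := preimage_edge_tiles wf (Hp n.-1 _); rewrite ?prednK.
  by have [] := preimage_edge_tiles wf (Hp i lt_i).
move=> i lt_i; exists (l i); split.
  by rewrite (word_step_val gS (nat_walk_step u l i)) mulKg.
by have [] := preimage_edge_tiles wf (Hp i lt_i).
Qed.

Lemma has_Z_snake_productE Gam : tileset_wf Gam ->
  has_Z_snake gS Gam <-> has_Z_snake gT (product_tileset Gam).
Proof.
by move=> wf; split; [apply: has_Z_snake_product | apply: has_Z_snake_of_product].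
Qed.

Lemma has_ouroboros_productE Gam : tileset_wf Gam ->
  has_ouroboros gS Gam <-> has_ouroboros gT (product_tileset Gam).
Proof.
by move=> wf; split; [apply: has_ouroboros_product | apply: has_ouroboros_of_product].
Qed.
End SnakeTransfer.

Theorem proposition7 (G H : groupType) (S T : finType)
    (gS : S -> G) (gT : T -> H)
    (injS : injective gS) (genS : generates gS)
    (injT : injective gT) (genT : generates gT)
    (phi : G -> H) (hphi : snake_embedding gS gT phi) :
  many_one_reduces (has_Z_snake gS) (has_Z_snake gT) /\
  many_one_reduces (has_ouroboros gS) (has_ouroboros gT).
Proof.
have [Q [q0 [delta [eta [M_ir [_ M_embeds]]]]]] := hphi.
split; apply: (many_one_reduces_product M_ir) => Gam.
  exact: (has_Z_snake_productE M_ir genS M_embeds).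
exact: (has_ouroboros_productE M_ir genS M_embeds).
Qed.
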